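(* Let $e_i\in\mathbb{R}^d$ have strictly positive coordinates and $\xi>0$. Then the budget correspondence $p\mapsto\mathcal B_i(p)$ is $(d^{3/2}/\xi^2)\|e_i\|$-Hausdorff Lipschitz on $\Delta_\xi$, i.e. for all $p_1,p_2\in\Delta_\xi$, $d_H(\mathcal B_i(p_1),\mathcal B_i(p_2))\le\frac{d^{3/2}}{\xi^2}\|e_i\|\,\|p_1-p_2\|$.
   Context: $\Delta_\xi=\{p\in\mathbb{R}^d:p_k>\xi\ \forall k\in[d],\ \sum_{k=1}^d p_k=1\}$; $\mathcal B_i(p)=\{x\in\mathbb{R}^d_+:p\cdot x\le p\cdot e_i\}$ is the budget set of agent $i$ with endowment $e_i$; $d_H$ is the Hausdorff distance with respect to the Euclidean norm $\|\cdot\|$. *)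

From HB Require Import structures.
From mathcomp Require Import all_boot all_order all_algebra.
From mathcomp Require Import all_classical all_reals all_analysis.
Set Implicit Arguments. Unset Strict Implicit. Unset Printing Implicit Defensive.
Import Order.TTheory GRing.Theory Num.Theory.
Local Open Scope classical_set_scope.
Local Open Scope ring_scope.

Section Defs.
Variables (R : realType) (d : nat).

Definition dotp (p x : 'I_d -> R) : R := \sum_(k < d) p k * x k.

Definition enorm (x : 'I_d -> R) : R := Num.sqrt (\sum_(k < d) x k ^+ 2).

Definition eucl_dist (x y : 'I_d -> R) : R := enorm (fun k => x k - y k).

Definition Delta (xi : R) : set ('I_d -> R) :=
  [set p | (forall k, xi < p k) /\ \sum_(k < d) p k = 1].

Definition budget (e p : 'I_d -> R) : set ('I_d -> R) :=
  [set x | (forall k, 0 <= x k) /\ dotp p x <= dotp p e].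

(* distance from a point to a set, in extended reals (+oo for the empty set) *)
Definition pt_set_dist (a : 'I_d -> R) (B : set ('I_d -> R)) : \bar R :=
  ereal_inf [set (eucl_dist a b)%:E | b in B].

Definition hausdorff (A B : set ('I_d -> R)) : \bar R :=
  Order.max (ereal_sup [set pt_set_dist a B | a in A])
            (ereal_sup [set pt_set_dist b A | b in B]).

End Defs.

From HB Require Import structures.
From mathcomp Require Import all_boot all_order all_algebra.
From mathcomp Require Import all_classical all_reals all_analysis.
From mathcomp Require Import lra ring zify.
Set Implicit Arguments. Unset Strict Implicit. Unset Printing Implicit Defensive.
Import Order.TTheory GRing.Theory Num.Theory.
Local Open Scope classical_set_scope.
Local Open Scope ring_scope.

(* A bundle x that is too expensive at prices p (p.x > p.e) is pulled back into
   the budget set along the ray to the origin, to t x with t = p.e / p.x.  This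
   moves it by (1 - t)|x| <= (1 - t) sum_k x_k, and since p_k > xi, the
   spending p.x dominates xi sum_k x_k, so the move is at most the excess
   (p.x - p.e) / xi.  For x affordable at p1, the excess at p2 is at most
   |p1 - p2| (sum_k x_k + sum_k e_k) <= |p1 - p2| |e| (1/xi + d).  Finally
   1 + d xi <= 2 <= d^(3/2) when d >= 2, and for d <= 1 the simplex is a
   single point. *)

Section EuclideanNorm.
Variables (R : realType) (d : nat).
Implicit Types (c : R) (v w : 'I_d -> R).

Lemma enorm_ge0 v : 0 <= enorm v.
Proof. exact: sqrtr_ge0. Qed.

Lemma normr_le_enorm v k : `|v k| <= enorm v.
Proof.
rewrite -sqrtr_sqr ler_sqrt; last by apply: sumr_ge0 => j _; rewrite sqr_ge0.
by rewrite (bigD1 k) //= lerDl sumr_ge0 // => j _; rewrite sqr_ge0.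
Qed.

Lemma enorm_le_l1 v : enorm v <= \sum_(k < d) `|v k|.
Proof.
have l1_ge0 : 0 <= \sum_(k < d) `|v k| by rewrite sumr_ge0.
rewrite -(ger0_norm l1_ge0) -sqrtr_sqr ler_sqrt ?sqr_ge0 //.
pose sq_le (a b : R) := 0 <= b /\ a <= b ^+ 2.
suff [] : sq_le (\sum_(k < d) v k ^+ 2) (\sum_(k < d) `|v k|) by [].
apply: (big_ind2 sq_le) => [|a1 b1 a2 b2 [b1_ge0 ?] [b2_ge0 ?]|k _].
- by split; rewrite ?expr0n.
- by split; [exact: addr_ge0 | nra].
- by split; rewrite ?real_normK ?num_real.
Qed.

Lemma l1_le_dim_enorm v : \sum_(k < d) `|v k| <= d%:R * enorm v.
Proof.
rewrite -[d in d%:R]card_ord mulr_natl -sumr_const.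
by apply: ler_sum => k _; exact: normr_le_enorm.
Qed.

Lemma enormZ c v : enorm (fun k => c * v k) = `|c| * enorm v.
Proof.
rewrite /enorm -sqrtr_sqr -sqrtrM ?sqr_ge0 // mulr_sumr.
by congr Num.sqrt; apply: eq_bigr => k _; rewrite exprMn.
Qed.

Lemma eucl_distC v w : eucl_dist v w = eucl_dist w v.
Proof.
by congr Num.sqrt; apply: eq_bigr => k _; rewrite -sqrrN opprB.
Qed.

Lemma eucl_distxx v : eucl_dist v v = 0.
Proof.
by rewrite /eucl_dist /enorm big1 ?sqrtr0 // => k _; rewrite subrr expr0n.
Qed.

End EuclideanNorm.

Section Hausdorff.
Variables (R : realType) (d : nat).
Implicit Types (A B : set ('I_d -> R)) (r : R).

Lemma pt_set_dist_le a B b r :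
  B b -> eucl_dist a b <= r -> (pt_set_dist a B <= r%:E)%E.
Proof.
by move=> Bb ab_le; apply: ge_ereal_inf; exists (eucl_dist a b)%:E; [exists b|].
Qed.

Lemma hausdorff_le A B r :
  (forall a, A a -> exists2 b, B b & eucl_dist a b <= r) ->
  (forall b, B b -> exists2 a, A a & eucl_dist b a <= r) ->
  (hausdorff A B <= r%:E)%E.
Proof.
move=> AB BA; rewrite /hausdorff ge_max.
apply/andP; split; apply: ge_ereal_sup => _ [x Ax <-].
- by have [y By xy_le] := AB x Ax; exact: pt_set_dist_le xy_le.
- by have [y Ay xy_le] := BA x Ax; exact: pt_set_dist_le xy_le.
Qed.

End Hausdorff.

Section Prices.
Variables (R : realType) (d : nat).
Implicit Types (xi c : R) (p q x v : 'I_d -> R).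

Lemma dotp_scaler p c x : dotp p (fun k => c * x k) = c * dotp p x.
Proof. by rewrite /dotp mulr_sumr; apply: eq_bigr => k _; rewrite mulrCA. Qed.

Lemma dotp_ge_sum xi p x :
  (forall k, xi <= p k) -> (forall k, 0 <= x k) ->
  xi * \sum_(k < d) x k <= dotp p x.
Proof.
by move=> p_ge x_ge0; rewrite mulr_sumr; apply: ler_sum => k _; rewrite ler_wpM2r.
Qed.

Lemma dotp_le_enorm p v :
  (forall k, 0 <= p k) -> \sum_(k < d) p k = 1 -> dotp p v <= enorm v.
Proof.
move=> p_ge0 p_sum1; rewrite -[enorm v]mul1r -p_sum1 mulr_suml.
apply: ler_sum => k _; rewrite ler_wpM2l //.
exact: le_trans (ler_norm _) (normr_le_enorm v k).
Qed.

Lemma dotpBl_le p q x :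
  dotp p x - dotp q x <= eucl_dist p q * \sum_(k < d) `|x k|.
Proof.
rewrite /dotp -sumrB mulr_sumr; apply: ler_sum => k _.
rewrite -mulrBl; apply: le_trans (ler_norm _) _; rewrite normrM ler_wpM2r //.
exact: (normr_le_enorm (fun k => p k - q k)).
Qed.

Lemma Delta_gt0 xi p k : 0 < xi -> Delta xi p -> 0 < p k.
Proof. by move=> xi_gt0 [p_gt _]; exact: lt_trans (p_gt k). Qed.

Lemma Delta_dim_mul_le1 xi p : Delta xi p -> d%:R * xi <= 1.
Proof.
move=> [p_gt p_sum1]; rewrite -[d in d%:R]card_ord mulr_natl -sumr_const -p_sum1.
by apply: ler_sum => k _; exact: ltW.
Qed.

Lemma Delta_subsingleton xi p q :
  (d <= 1)%N -> Delta xi p -> Delta xi q -> p = q.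
Proof.
move=> d_le1 [_ p_sum1] [_ q_sum1]; apply/funext => k.
have all_k : (fun j : 'I_d => true) =1 pred1 k.
  move=> j /=; apply/esym/eqP/val_inj => /=.
  by have := ltn_ord j; have := ltn_ord k; lia.
by move: p_sum1 q_sum1; rewrite !(big_pred1 k all_k) => -> ->.
Qed.

End Prices.

Section Budget.
Variables (R : realType) (d : nat).
Implicit Types (xi : R) (e p x : 'I_d -> R).

Lemma budget_excess_dist xi e p x :
  0 <= xi -> (forall k, xi <= p k) -> 0 <= dotp p e -> (forall k, 0 <= x k) ->
  exists2 y, budget e p y & xi * eucl_dist x y <= Num.max 0 (dotp p x - dotp p e).
Proof.
move=> xi_ge0 p_ge pe_ge0 x_ge0.
have [affordable | too_dear] := lerP (dotp p x) (dotp p e).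
  by exists x; rewrite ?eucl_distxx ?mulr0 ?le_max ?lexx.
set P := dotp p x; set q := dotp p e; set t := q / P.
have P_gt0 : 0 < P := le_lt_trans pe_ge0 too_dear.
have t_ge0 : 0 <= t by rewrite divr_ge0 // ltW.
have t_le1 : t <= 1 by rewrite ler_pdivrMr // mul1r ltW.
exists (fun k => t * x k).
  split=> [k|]; first exact: mulr_ge0.
  by rewrite dotp_scaler divfK ?gt_eqF.
have -> : eucl_dist x (fun k => t * x k) = (1 - t) * enorm x.
  rewrite -[1 - t]ger0_norm ?subr_ge0 // -enormZ /eucl_dist.
  by congr enorm; apply/funext => k; rewrite mulrBl mul1r.
have excess : (1 - t) * P = P - q by rewrite mulrBl mul1r divfK ?gt_eqF.
rewrite le_max -excess mulrCA ler_wpM2l ?subr_ge0 ?orbT //.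
apply: le_trans (dotp_ge_sum p_ge x_ge0).
rewrite ler_wpM2l // (le_trans (enorm_le_l1 x)) //.
by under eq_bigr do rewrite ger0_norm //.
Qed.

Lemma budget_excess_le xi e p1 p2 x :
  0 < xi -> Delta xi p1 -> budget e p1 x ->
  xi * (dotp p2 x - dotp p2 e) <= eucl_dist p1 p2 * enorm e * (1 + d%:R * xi).
Proof.
move=> xi_gt0 Dp1 [x_ge0 x_affordable].
set N := eucl_dist p1 p2; set Sx : R := \sum_(k < d) `|x k|.
have N_ge0 : 0 <= N := enorm_ge0 _.
have xi_Sx : xi * Sx <= enorm e.
  rewrite /Sx; under eq_bigr do rewrite ger0_norm //.
  apply: le_trans (dotp_ge_sum (fun k => ltW (Dp1.1 k)) x_ge0) _.
  apply: le_trans x_affordable _.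
  exact: dotp_le_enorm (fun k => ltW (Delta_gt0 k xi_gt0 Dp1)) Dp1.2.
have excess : dotp p2 x - dotp p2 e <= N * Sx + N * \sum_(k < d) `|e k|.
  have := dotpBl_le p2 p1 x; have := dotpBl_le p1 p2 e.
  rewrite (eucl_distC p2 p1) -/N -/Sx; move: x_affordable; lra.
apply: le_trans (ler_wpM2l (ltW xi_gt0) excess) _.
have -> : xi * (N * Sx + N * \sum_(k < d) `|e k|) =
          N * (xi * Sx) + N * xi * \sum_(k < d) `|e k| by ring.
have -> : N * enorm e * (1 + d%:R * xi) = N * enorm e + N * xi * (d%:R * enorm e)
  by ring.
apply: lerD; first exact: ler_wpM2l xi_Sx.
by apply: ler_wpM2l (l1_le_dim_enorm e); rewrite mulr_ge0 // ltW.
Qed.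

Lemma add1_le_dim_powR xi :
  (2 <= d)%N -> d%:R * xi <= 1 -> 1 + d%:R * xi <= d%:R `^ (3 / 2).
Proof.
move=> d_ge2 dxi_le1; have d_ge2R : (2 : R) <= d%:R by rewrite ler_nat.
by apply: le_trans (le1r_powR _ _); lra.
Qed.

Lemma budget_near xi e p1 p2 x :
  (forall k, 0 <= e k) -> 0 < xi -> Delta xi p1 -> Delta xi p2 -> budget e p1 x ->
  exists2 y, budget e p2 y &
    eucl_dist x y <= d%:R `^ (3 / 2) / xi ^+ 2 * enorm e * eucl_dist p1 p2.
Proof.
move=> e_ge0 xi_gt0 Dp1 Dp2 Bx.
have [d_le1 | d_ge2] := leqP d 1.
  rewrite -(Delta_subsingleton d_le1 Dp1 Dp2) in Bx *.
  by exists x; rewrite // !eucl_distxx mulr0.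
have p2e_ge0 : 0 <= dotp p2 e.
  by apply: sumr_ge0 => k _; rewrite mulr_ge0 // ltW // (Delta_gt0 k xi_gt0 Dp2).
have [y By xi_dist] :=
  budget_excess_dist (ltW xi_gt0) (fun k => ltW (Dp2.1 k)) p2e_ge0 Bx.1.
exists y => //.
have -> : d%:R `^ (3 / 2) / xi ^+ 2 * enorm e * eucl_dist p1 p2 =
          eucl_dist p1 p2 * enorm e * d%:R `^ (3 / 2) / xi ^+ 2 by ring.
rewrite ler_pdivlMr ?exprn_gt0 // [_ * xi ^+ 2]mulrC expr2 -[xi * xi * _]mulrA.
apply: le_trans (ler_wpM2l (ltW xi_gt0) xi_dist) _.
rewrite (maxr_pMr _ _ (ltW xi_gt0)) ge_max; apply/andP; split.
  by rewrite mulr0 mulr_ge0 ?powR_ge0 // mulr_ge0 // enorm_ge0.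
apply: le_trans (budget_excess_le p2 xi_gt0 Dp1 Bx) _.
apply: ler_wpM2l; first by rewrite mulr_ge0 // enorm_ge0.
exact: add1_le_dim_powR d_ge2 (Delta_dim_mul_le1 Dp1).
Qed.

End Budget.

Theorem mainTheorem18 (R : realType) (d : nat) (e : 'I_d -> R) (xi : R) :
  (forall k, 0 < e k) -> 0 < xi ->
  forall p1 p2 : 'I_d -> R, Delta xi p1 -> Delta xi p2 ->
  (hausdorff (budget e p1) (budget e p2)
    <= ((d%:R `^ (3 / 2) / xi ^+ 2) * enorm e * eucl_dist p1 p2)%:E)%E.
Proof.
move=> e_gt0 xi_gt0 p1 p2 Dp1 Dp2; have e_ge0 k := ltW (e_gt0 k).
apply: hausdorff_le => x Bx; first exact: budget_near.
by rewrite eucl_distC; exact: budget_near.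
Qed.
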